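(* Let $\mathbf{A}$ and $\mathbf{B}$ be $\mathbf{K}$-objects and $f_1,f_2:\mathbf{A}\to\mathbf{B}$ distinct $\mathbf{K}$-morphisms. Then the natural transformations $\Phi f_1$ and $\Phi f_2$ from $\Phi\mathbf{B}$ to $\Phi\mathbf{A}$ are distinct; that is, $\Phi$ is faithful.
   Context: $\mathbf{T}$ is the category whose objects are pairs $(A,\mathcal{R})$ with $A$ a set and $\mathcal{R}$ a family of subsets of $A$, and whose morphisms $f:(A,\mathcal{R})\to(B,\mathcal{S})$ are maps $f:A\to B$ with $f^{-1}[S]\in\mathcal{R}$ for all $S\in\mathcal{S}$. Fix a simple graph with vertex set $V=\{v_1,\dots,v_6\}$ and edge set $\mathcal{G}$ (two-element subsets of $V$) with no non-identity automorphism. For a $\mathbf{T}$-object $(A,\mathcal{R})$ let $\Psi(A,\mathcal{R})=(\overline{A},\overline{\mathcal{R}})$ with $\overline{A}=A\sqcup V$ and $\overline{\mathcal{R}}$ consisting of $\{v_i\}$, $\overline{A}\setminus\{v_i\}$ ($i=1,\dots,6$), $G$, $\overline{A}\setminus G$ ($G\in\mathcal{G}$), and $\{v_1,v_2,v_3\}\cup R$, $\{v_4,v_5,v_6\}\cup(A\setminus R)$ ($R\in\mathcal{R}$). $\mathbf{K}$ is the full subcategory of $\mathbf{T}$ on the objects of the form $\Psi(A,\mathcal{R})$. For a $\mathbf{K}$-object $\mathbf{A}=(A,\mathcal{R})$ and a set $X$, let $\approx_{\mathbf{A}}$ be the equivalence on maps $A\to X$: $g_1\approx_{\mathbf{A}}g_2$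 iff $g_1=g_2$, or $g_1[A]=g_2[A]$ is a two-element set $\{x,x'\}$ and $g_1^{-1}[\{x\}]=g_2^{-1}[\{x'\}]\in\mathcal{R}$. The set functor $\Phi\mathbf{A}$ is $(\Phi\mathbf{A})X=\{g\,;\,g:A\to X\}/\!\approx_{\mathbf{A}}$, $((\Phi\mathbf{A})h)(g/\!\approx_{\mathbf{A}})=hg/\!\approx_{\mathbf{A}}$. For a $\mathbf{K}$-morphism $f:\mathbf{A}\to\mathbf{B}=(B,\mathcal{S})$, $\Phi f:\Phi\mathbf{B}\to\Phi\mathbf{A}$ is the natural transformation with $(\Phi f)_X(g/\!\approx_{\mathbf{B}})=gf/\!\approx_{\mathbf{A}}$ for $g:B\to X$. *)

From mathcomp Require Import all_boot.
Unset Strict Implicit. Unset Printing Implicit Defensive.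

Record Tobj := mkTobj { carrier : Type; fam : (carrier -> Prop) -> Prop }.
Arguments fam : clear implicits.

Definition is_Tmor (X Y : Tobj) (f : carrier X -> carrier Y) : Prop :=
  forall S, fam Y S -> fam X (fun a => S (f a)).

(* The fixed graph: vertices v_1..v_6 are the ordinals 0..5 of 'I_6;
   a simple graph is a symmetric irreflexive relation; edges {i,j} with e i j. *)
Definition simple_graph (e : rel 'I_6) : Prop := symmetric e /\ irreflexive e.

Definition rigid_graph (e : rel 'I_6) : Prop :=
  forall s : 'I_6 -> 'I_6, bijective s ->
    (forall i j, e (s i) (s j) = e i j) -> forall i, s i = i.

Definition Psi_fam (e : rel 'I_6) (A : Type) (R : (A -> Prop) -> Prop)
  (S : A + 'I_6 -> Prop) : Prop :=
  (exists i : 'I_6, S = (fun z => z = inr i)) \/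
  (exists i : 'I_6, S = (fun z => z <> inr i)) \/
  (exists i j : 'I_6, e i j /\ S = (fun z => z = inr i \/ z = inr j)) \/
  (exists i j : 'I_6, e i j /\ S = (fun z => ~ (z = inr i \/ z = inr j))) \/
  (exists RR, R RR /\
     S = (fun z => match z with inl a => RR a | inr v => (v < 3)%N end)) \/
  (exists RR, R RR /\
     S = (fun z => match z with inl a => ~ RR a | inr v => (3 <= v)%N end)).

Definition Psi (e : rel 'I_6) (A : Type) (R : (A -> Prop) -> Prop) : Tobj :=
  @mkTobj (A + 'I_6) (Psi_fam e A R).

Definition approx (A : Tobj) {X : Type} (g1 g2 : carrier A -> X) : Prop :=
  g1 = g2 \/
  exists x x' : X, x <> x' /\
    (forall y, (exists a, g1 a = y) <-> (y = x \/ y = x')) /\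
    (forall y, (exists a, g2 a = y) <-> (y = x \/ y = x')) /\
    (fun a => g1 a = x) = (fun a => g2 a = x') /\
    fam A (fun a => g1 a = x).

Definition Phi_class (A : Tobj) {X : Type} (g : carrier A -> X) : (carrier A -> X) -> Prop :=
  fun h => approx A g h.

Definition Phi_mor_rep (A B : Tobj) (f : carrier A -> carrier B) (X : Type)
  (g : carrier B -> X) : (carrier A -> X) -> Prop :=
  Phi_class A (fun a => g (f a)).

(** If [Phi f1] and [Phi f2] agree on the identity map of the carrier of [B],
    then [f1 ≈ f2]; for [f1 <> f2] this forces [f1] to take only two values.
    But every member of a family [Psi(A, R)] is inhabited, and [{v_i}] lies in
    the family of [Psi(B, S)], so a morphism hits all six vertices. *)
From mathcomp Require Import all_boot.

Lemma exists_ord_neq2 {n : nat} (i j : 'I_n) :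
  (2 < n)%N -> exists k : 'I_n, k <> i /\ k <> j.
Proof.
move=> n_gt2; have : (0 < #|~: [set i; j]|)%N.
  have := cardsC [set i; j]; rewrite card_ord cards2 lt0n => card_sum.
  apply/eqP=> card0; move: n_gt2; rewrite -card_sum card0 addn0.
  by case: (i != j).
case/card_gt0P=> k; rewrite !inE negb_or => /andP[/eqP ki /eqP kj].
by exists k.
Qed.

Lemma Psi_fam_inhabited (e : rel 'I_6) (A : Type) (R : (A -> Prop) -> Prop)
    (S : A + 'I_6 -> Prop) :
  Psi_fam e A R S -> exists z, S z.
Proof.
case=> [[i ->]|[[i ->]|[[i [j [_ ->]]]|[[i [j [_ ->]]]|[[RR [_ ->]]|[RR [_ ->]]]]]]].
- by exists (inr i).
- have [k [ki _]] := exists_ord_neq2 i i isT.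
  by exists (inr k) => [[]].
- by exists (inr i); left.
- have [k [ki kj]] := exists_ord_neq2 i j isT.
  by exists (inr k) => [[[]|[]]].
- by exists (inr (@Ordinal 6 0 isT)).
- by exists (inr (@Ordinal 6 5 isT)).
Qed.

Lemma Tmor_hits_singleton (X Y : Tobj) (f : carrier X -> carrier Y) (y : carrier Y) :
  (forall S, fam X S -> exists z, S z) ->
  is_Tmor X Y f -> fam Y (fun z => z = y) -> exists a, f a = y.
Proof. by move=> inhabX fY /fY /inhabX. Qed.

Lemma Psi_mor_hits_vertex {e : rel 'I_6} {A : Type} {RA : (A -> Prop) -> Prop}
    {B : Type} {RB : (B -> Prop) -> Prop}
    {f : carrier (Psi e A RA) -> carrier (Psi e B RB)} (i : 'I_6) :
  is_Tmor (Psi e A RA) (Psi e B RB) f -> exists a, f a = inr i.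
Proof.
move=> fmor; apply: Tmor_hits_singleton fmor _; first exact: Psi_fam_inhabited.
by left; exists i.
Qed.

Lemma Phi_class_inj {A : Tobj} {X : Type} {g1 g2 : carrier A -> X} :
  Phi_class A g1 = Phi_class A g2 -> approx A g1 g2.
Proof. by move=> eq12; have : Phi_class A g1 g2 by rewrite eq12; left. Qed.

Lemma approx_neq_two_valued {A : Tobj} {X : Type} {g1 g2 : carrier A -> X} :
  approx A g1 g2 -> g1 <> g2 -> exists x x' : X, forall a, g1 a = x \/ g1 a = x'.
Proof.
case=> [-> //|[x [x' [_ [im1 _]]]] _].
by exists x, x' => a; apply/im1; exists a.
Qed.

Theorem lemma3p5 (e : rel 'I_6) (He : simple_graph e) (Hrigid : rigid_graph e)
  (A : Type) (RA : (A -> Prop) -> Prop) (B : Type) (RB : (B -> Prop) -> Prop)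
  (f1 f2 : carrier (Psi e A RA) -> carrier (Psi e B RB))
  (Hf1 : is_Tmor (Psi e A RA) (Psi e B RB) f1)
  (Hf2 : is_Tmor (Psi e A RA) (Psi e B RB) f2)
  (Hneq : f1 <> f2) :
  exists (X : Type) (g : carrier (Psi e B RB) -> X),
    Phi_mor_rep (Psi e A RA) (Psi e B RB) f1 X g <> Phi_mor_rep (Psi e A RA) (Psi e B RB) f2 X g.
Proof.
exists (carrier (Psi e B RB)), id => /Phi_class_inj f1_approx_f2.
have [x [x' two_valued]] := approx_neq_two_valued f1_approx_f2 Hneq.
have vertex_value (i : 'I_6) : inr i = x \/ inr i = x'.
  by have [a <-] := Psi_mor_hits_vertex i Hf1; apply: two_valued.
case: (vertex_value (@Ordinal 6 0 isT)) (vertex_value (@Ordinal 6 1 isT))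
  (vertex_value (@Ordinal 6 2 isT)) => [] v0 [] v1 [] v2; congruence.
Qed.
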